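(* Let $0<\epsilon<\pi/2$. For the navigation model with parameter $\epsilon$, every configuration of $\mathscr{C}'$ is $1$-looping.
   Context: $d=2$; a marked point is $x=(\xi,u)\in\mathbb{R}^2\times[0,1]$. Navigation model with parameter $\epsilon$: for $x=(\xi,u)$ let $C(x)=\xi+\{(r\cos\beta,r\sin\beta):r>0,\ |\beta-2\pi u|<\epsilon\}$; for a locally finite configuration $\varphi\subset\mathbb{R}^2\times[0,1]$ and $x\in\varphi$, $h(\varphi,x)$ is the marked point of $\varphi$ whose location is the unique closest point to $\xi$ (Euclidean norm) among the locations of points of $\varphi$ lying in $C(x)$; $\mathscr{C}'$ is the set of configurations for which these closest points exist and are unique for every $x\in\varphi$. Graph edges $x\to h(\varphi,x)$; $\mathrm{For}(x,\varphi)=\{x,h(\varphi,x),h(\varphi,h(\varphi,x)),\dots\}$; $\mathrm{Back}(x,\varphi)=\{y\in\varphi:x\in\mathrm{For}(y,\varphi)\}$. $k$-looping: $\varphi\in\mathscr{C}'$ is $k$-looping if for every $x\in\varphi$ there is an open ball $A_x\subset(\mathbb{R}^2\times[0,1])^k$ such that for all $(x_1,\dots,x_k)\in A_x$ (with $\varphi\cup\{x_1,\dots,x_k\}\in\mathscr{C}'$): (i) $\mathrm{For}(x,\varphi\cup\{x_1,\dots,x_k\})\subset\{x,x_1,\dots,x_k\}$; (ii) each $x_i$ lies in the connected component of $x$ in the graph on $\varphi\cup\{x_1,\dots,x_k\}$ and $\mathrm{For}(x_i,\varphi\cup\{x_1,\dots,x_k\})\subset\{x,x_1,\dots,x_k\}$;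 (iii) every $y\in\varphi\setminus\{x\}$ with $h(\varphi\cup\{x_1,\dots,x_k\},y)\ne h(\varphi,y)$ satisfies $h(\varphi\cup\{x_1,\dots,x_k\},y)\in\mathrm{Back}(x,\varphi\cup\{x_1,\dots,x_k\})\cap\{x,x_1,\dots,x_k\}$. *)

From Stdlib Require Import Reals Lra.
Open Scope R_scope.

(** A marked point x = (xi, u) in R^2 x [0,1]: location (px, py), mark mk. *)
Record MP : Type := mkMP { px : R; py : R; mk : R }.

Definition ldist (x y : MP) : R :=
  sqrt ((px x - px y)^2 + (py x - py y)^2).

Definition dist3sq (x y : MP) : R :=
  (px x - px y)^2 + (py x - py y)^2 + (mk x - mk y)^2.

(** Configurations: subsets of R^2 x [0,1] that are locally finite
    (every bounded region of R^2 contains finitely many points). *)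
Definition config (phi : MP -> Prop) : Prop :=
  (forall y, phi y -> 0 <= mk y <= 1) /\
  (forall Rad : R, exists l : list MP,
     forall y, phi y -> sqrt (px y ^ 2 + py y ^ 2) <= Rad -> List.In y l).

Definition in_cone (eps : R) (x : MP) (p1 p2 : R) : Prop :=
  exists r b : R, 0 < r /\ Rabs (b - 2 * PI * mk x) < eps /\
    p1 = px x + r * cos b /\ p2 = py x + r * sin b.

Definition in_coneP (eps : R) (x y : MP) : Prop := in_cone eps x (px y) (py y).

(** [is_h eps phi x y] : y = h(phi, x), i.e. y is the point of phi in C(x)
    whose location is strictly closer to xi than that of every other point of
    phi in C(x) (existence and uniqueness of the closest point). *)
Definition is_h (eps : R) (phi : MP -> Prop) (x y : MP) : Prop :=
  phi y /\ in_coneP eps x y /\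
  (forall z, phi z -> in_coneP eps x z -> z <> y -> ldist x y < ldist x z).

Definition Cprime (eps : R) (phi : MP -> Prop) : Prop :=
  config phi /\ forall x, phi x -> exists y, is_h eps phi x y.

Inductive For (eps : R) (phi : MP -> Prop) (x : MP) : MP -> Prop :=
  | For_refl : For eps phi x x
  | For_step : forall y z, For eps phi x y -> is_h eps phi y z -> For eps phi x z.

Definition Back (eps : R) (phi : MP -> Prop) (x y : MP) : Prop :=
  phi y /\ For eps phi y x.

Inductive conn (eps : R) (phi : MP -> Prop) (x : MP) : MP -> Prop :=
  | conn_refl : conn eps phi x x
  | conn_fwd : forall y z, conn eps phi x y -> phi y -> is_h eps phi y z -> conn eps phi x z
  | conn_bwd : forall y z, conn eps phi x y -> phi z -> is_h eps phi z y -> conn eps phi x z.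

Definition add_pts (phi : MP -> Prop) (k : nat) (xs : nat -> MP) (y : MP) : Prop :=
  phi y \/ exists i, (i < k)%nat /\ y = xs i.

Definition in_new (x : MP) (k : nat) (xs : nat -> MP) (y : MP) : Prop :=
  y = x \/ exists i, (i < k)%nat /\ y = xs i.

Definition in_ball (k : nat) (cs : nat -> MP) (rho : R) (xs : nat -> MP) : Prop :=
  sum_f_R0 (fun i => if Nat.ltb i k then dist3sq (xs i) (cs i) else 0) k < rho ^ 2.

Definition ball_in_space (k : nat) (cs : nat -> MP) (rho : R) : Prop :=
  0 < rho /\ forall xs, in_ball k cs rho xs -> forall i, (i < k)%nat -> 0 <= mk (xs i) <= 1.

Definition k_looping (eps : R) (k : nat) (phi : MP -> Prop) : Prop :=
  Cprime eps phi /\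
  forall x, phi x ->
    exists (cs : nat -> MP) (rho : R), ball_in_space k cs rho /\
      forall xs : nat -> MP, in_ball k cs rho xs ->
        let phi' := add_pts phi k xs in
        Cprime eps phi' ->
        (forall y, For eps phi' x y -> in_new x k xs y) /\
        (forall i, (i < k)%nat ->
           conn eps phi' x (xs i) /\
           (forall y, For eps phi' (xs i) y -> in_new x k xs y)) /\
        (forall y z z', phi y -> y <> x -> is_h eps phi y z -> is_h eps phi' y z' ->
           z' <> z -> Back eps phi' x z' /\ in_new x k xs z').

(* Local finiteness gives M > 0 such that the only points of phi within distance sqrt M
   of x sit at x's own location, which no cone of x contains.  Add a point x1 inside the
   cone of x, much closer than sqrt M, whose mark makes its cone point back at x.  Then
   h(x) = x1 and h(x1) = x: the two points form a 2-cycle containing the forward orbits of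
   both.  A point of phi whose target changes must now target x1, which lies in Back(x).
   Since cones are open, every x1 in a small ball around this choice works. *)

From Stdlib Require Import Reals Lra Lia Classical.
Open Scope R_scope.

Definition ldist2 (x y : MP) : R := (px x - px y) ^ 2 + (py x - py y) ^ 2.

Lemma ldist2_ge0 x y : 0 <= ldist2 x y.
Proof.
  unfold ldist2.
  pose proof (pow2_ge_0 (px x - px y)); pose proof (pow2_ge_0 (py x - py y)); lra.
Qed.

Lemma ldist2_sym x y : ldist2 x y = ldist2 y x.
Proof. unfold ldist2; ring. Qed.

Lemma ldist2_lt_of_ldist_lt x y z w : ldist x y < ldist z w -> ldist2 x y < ldist2 z w.
Proof. apply sqrt_lt_0_alt. Qed.

Lemma ldist2_triangle x y w : ldist2 x w <= 2 * ldist2 y w + 2 * ldist2 y x.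
Proof.
  unfold ldist2.
  pose proof (pow2_ge_0 ((px y - px w) + (px y - px x))).
  pose proof (pow2_ge_0 ((py y - py w) + (py y - py x))).
  nra.
Qed.

Lemma ldist2_same_loc w x y :
  px y = px x -> py y = py x -> ldist2 w y = ldist2 w x.
Proof. intros Ex Ey; unfold ldist2; rewrite Ex, Ey; reflexivity. Qed.

Lemma sqr_pow2_pos t : t <> 0 -> 0 < t ^ 2.
Proof. intros Ht; rewrite <- Rsqr_pow2; apply Rsqr_pos_lt, Ht. Qed.

Lemma ldist2_pos_or_same_loc x y : 0 < ldist2 x y \/ (px y = px x /\ py y = py x).
Proof.
  unfold ldist2.
  pose proof (pow2_ge_0 (px x - px y)); pose proof (pow2_ge_0 (py x - py y)).
  destruct (Req_dec (px y) (px x)) as [Ex|Nx].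
  - destruct (Req_dec (py y) (py x)) as [Ey|Ny]; [right; split; assumption|left].
    assert (0 < (py x - py y) ^ 2) by (apply sqr_pow2_pos; lra). lra.
  - left. assert (0 < (px x - px y) ^ 2) by (apply sqr_pow2_pos; lra). lra.
Qed.

Definition isolated_in (phi : MP -> Prop) (x : MP) (M : R) : Prop :=
  forall y, phi y -> ldist2 x y < M -> px y = px x /\ py y = py x.

Lemma list_isolated x (l : list MP) :
  exists M, 0 < M /\ isolated_in (fun y => List.In y l) x M.
Proof.
  induction l as [|a l [M [HM Hiso]]].
  - exists 1; split; [lra|]. intros y [].
  - destruct (ldist2_pos_or_same_loc x a) as [Ha|Ea].
    + exists (Rmin M (ldist2 x a)); split; [apply Rmin_pos; assumption|].
      intros y [<-|Hy] Hlt.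
      * pose proof (Rmin_r M (ldist2 x a)); lra.
      * apply Hiso; [assumption|]. pose proof (Rmin_l M (ldist2 x a)); lra.
    + exists M; split; [assumption|].
      intros y [<-|Hy] Hlt; [assumption|]. apply Hiso; assumption.
Qed.

Lemma norm_le_abs_sum a b : sqrt (a ^ 2 + b ^ 2) <= Rabs a + Rabs b.
Proof.
  pose proof (Rabs_pos a); pose proof (Rabs_pos b).
  rewrite <- (sqrt_pow2 (Rabs a + Rabs b)) by lra.
  apply sqrt_le_1_alt. rewrite <- (pow2_abs a), <- (pow2_abs b). nra.
Qed.

Lemma Rabs_lt_of_pow2_lt t rho : 0 < rho -> t ^ 2 < rho ^ 2 -> Rabs t < rho.
Proof. intros Hrho Ht. rewrite <- pow2_abs in Ht. pose proof (Rabs_pos t). nra. Qed.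

Lemma config_isolated phi x : config phi -> exists M, 0 < M /\ isolated_in phi x M.
Proof.
  intros [_ Hfin].
  destruct (Hfin (Rabs (px x) + Rabs (py x) + 2)) as [l Hl].
  destruct (list_isolated x l) as [M [HM Hiso]].
  exists (Rmin 1 M); split; [apply Rmin_pos; lra|].
  intros y Hy Hlt. pose proof (Rmin_l 1 M); pose proof (Rmin_r 1 M).
  apply Hiso; [|lra]. apply Hl; [assumption|].
  unfold ldist2 in Hlt.
  pose proof (pow2_ge_0 (px x - px y)); pose proof (pow2_ge_0 (py x - py y)).
  assert (Rabs (px x - px y) < 1) by (apply Rabs_lt_of_pow2_lt; lra).
  assert (Rabs (py x - py y) < 1) by (apply Rabs_lt_of_pow2_lt; lra).
  pose proof (Rabs_triang_inv (px y) (px x)); pose proof (Rabs_triang_inv (py y) (py x)).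
  rewrite (Rabs_minus_sym (px y)), (Rabs_minus_sym (py y)) in *.
  pose proof (norm_le_abs_sum (px y) (py y)). lra.
Qed.

Lemma cos2_sin2 t : cos t ^ 2 + sin t ^ 2 = 1.
Proof. rewrite <- !Rsqr_pow2, Rplus_comm. apply sin2_cos2. Qed.

Lemma in_coneP_ldist2_pos eps x y : in_coneP eps x y -> 0 < ldist2 x y.
Proof.
  intros [r [b [Hr [_ [Ex Ey]]]]]. unfold ldist2. rewrite Ex, Ey.
  replace ((px x - (px x + r * cos b)) ^ 2 + (py x - (py x + r * sin b)) ^ 2)
    with (r ^ 2 * (cos b ^ 2 + sin b ^ 2)) by ring.
  rewrite cos2_sin2. nra.
Qed.

Lemma is_h_unique eps P y z1 z2 : is_h eps P y z1 -> is_h eps P y z2 -> z1 = z2.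
Proof.
  intros [P1 [C1 H1]] [P2 [C2 H2]].
  destruct (classic (z1 = z2)) as [E|N]; [assumption|].
  pose proof (H1 z2 P2 C2 (not_eq_sym N)); pose proof (H2 z1 P1 C1 N); lra.
Qed.

Lemma is_h_subset eps (P Q : MP -> Prop) y z :
  (forall w, Q w -> P w) -> Q z -> is_h eps P y z -> is_h eps Q y z.
Proof.
  intros HQP Qz [_ [Cz Hz]]. split; [assumption|split; [assumption|]].
  intros w Qw. apply Hz, HQP, Qw.
Qed.

Lemma is_h_of_nearest eps P a b :
  (exists y, is_h eps P a y) -> P b -> in_coneP eps a b ->
  (forall z, P z -> in_coneP eps a z -> ldist2 a z < ldist2 a b -> z = b) ->
  is_h eps P a b.
Proof.
  intros [y Hy] Pb Cb Hnear.
  destruct (classic (y = b)) as [<-|N]; [assumption|].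
  destruct Hy as [Py [Cy Hcloser]].
  exfalso. apply N, Hnear; [assumption|assumption|].
  apply ldist2_lt_of_ldist_lt, Hcloser; [assumption|assumption|]. intros E; apply N; symmetry; exact E.
Qed.

Lemma For_two_cycle eps P a b y :
  is_h eps P a b -> is_h eps P b a -> For eps P a y -> y = a \/ y = b.
Proof.
  intros Hab Hba HF. induction HF as [|y z _ IH Hz]; [left; reflexivity|].
  destruct IH as [-> | ->]; [right | left]; eapply is_h_unique; eassumption.
Qed.

Lemma polar_of_pos_abscissa a c : 0 < a ->
  exists r, 0 < r /\ a = r * cos (atan (c / a)) /\ c = r * sin (atan (c / a)).
Proof.
  intros Ha. rewrite cos_atan, sin_atan.
  assert (Hq : 0 < 1 + (c / a)²) by (pose proof (Rle_0_sqr (c / a)); lra).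
  assert (Hs : 0 < sqrt (1 + (c / a)²)) by (apply sqrt_lt_R0; exact Hq).
  exists (a * sqrt (1 + (c / a)²)). split; [nra|]. split; field; lra.
Qed.

Lemma atan_abs_lt t delta : 0 < delta < PI / 2 -> Rabs t < tan delta -> Rabs (atan t) < delta.
Proof.
  intros Hd Ht. pose proof PI_RGT_0.
  assert (Hat : atan (tan delta) = delta) by (apply atan_tan; lra).
  apply Rabs_def2 in Ht as [Hlt Hgt].
  apply Rabs_def1.
  - rewrite <- Hat. apply atan_increasing, Hlt.
  - rewrite <- Hat, <- atan_opp. apply atan_increasing, Hgt.
Qed.

(* The hypotheses bound the coordinates of [(vx, vy)] in the frame rotated by [th]. *)
Lemma polar_near_direction th delta vx vy :
  0 < delta < PI / 2 ->
  0 < vx * cos th + vy * sin th ->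
  Rabs (- vx * sin th + vy * cos th) < tan delta * (vx * cos th + vy * sin th) ->
  exists r phi, 0 < r /\ Rabs phi < delta /\
    vx = r * cos (th + phi) /\ vy = r * sin (th + phi).
Proof.
  set (a := vx * cos th + vy * sin th). set (c := - vx * sin th + vy * cos th).
  intros Hd Ha Hc.
  destruct (polar_of_pos_abscissa a c Ha) as [r [Hr [Ea Ec]]].
  exists r, (atan (c / a)). split; [exact Hr|split].
  - apply atan_abs_lt; [exact Hd|].
    unfold Rdiv. rewrite Rabs_mult, Rabs_inv, (Rabs_right a) by lra.
    apply (Rmult_lt_reg_r a); [exact Ha|]. field_simplify; lra.
  - rewrite cos_plus, sin_plus.
    replace (r * (cos th * cos (atan (c / a)) - sin th * sin (atan (c / a))))
      with (cos th * (r * cos (atan (c / a))) - sin th * (r * sin (atan (c / a)))) by ring.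
    replace (r * (sin th * cos (atan (c / a)) + cos th * sin (atan (c / a))))
      with (sin th * (r * cos (atan (c / a))) + cos th * (r * sin (atan (c / a)))) by ring.
    rewrite <- Ea, <- Ec. unfold a, c.
    split; [rewrite <- (Rmult_1_r vx) at 1 | rewrite <- (Rmult_1_r vy) at 1];
      rewrite <- (cos2_sin2 th); ring.
Qed.

Lemma Rabs_lin_comb_lt w1 w2 c1 c2 rho :
  Rabs w1 < rho -> Rabs w2 < rho -> -1 <= c1 <= 1 -> -1 <= c2 <= 1 ->
  Rabs (w1 * c1 + w2 * c2) < 2 * rho.
Proof.
  intros H1 H2 Hc1 Hc2. eapply Rle_lt_trans; [apply Rabs_triang|]. rewrite !Rabs_mult.
  assert (Rabs c1 <= 1) by (apply Rabs_le; lra). assert (Rabs c2 <= 1) by (apply Rabs_le; lra).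
  pose proof (Rabs_pos w1); pose proof (Rabs_pos w2);
  pose proof (Rabs_pos c1); pose proof (Rabs_pos c2). nra.
Qed.

Lemma polar_near_ray x x1 th d rho delta :
  0 < delta < PI / 2 -> 0 < d -> rho <= d / 4 -> 4 * rho <= d * tan delta ->
  Rabs (px x1 - (px x + d * cos th)) < rho ->
  Rabs (py x1 - (py x + d * sin th)) < rho ->
  exists r phi, 0 < r /\ Rabs phi < delta /\
    px x1 = px x + r * cos (th + phi) /\ py x1 = py x + r * sin (th + phi).
Proof.
  set (wx := px x1 - (px x + d * cos th)). set (wy := py x1 - (py x + d * sin th)).
  intros Hdelta Hd Hrho Htan Hwx Hwy.
  pose proof (COS_bound th); pose proof (SIN_bound th).
  assert (Ea : (px x1 - px x) * cos th + (py x1 - py x) * sin th = d + (wx * cos th + wy * sin th)).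
  { unfold wx, wy.
    replace d with (d * (cos th ^ 2 + sin th ^ 2)) at 1 by (rewrite cos2_sin2; ring). ring. }
  assert (Ec : - (px x1 - px x) * sin th + (py x1 - py x) * cos th = wx * - sin th + wy * cos th)
    by (unfold wx, wy; ring).
  pose proof (Rabs_lin_comb_lt wx wy (cos th) (sin th) rho Hwx Hwy ltac:(lra) ltac:(lra)) as Ba.
  pose proof (Rabs_lin_comb_lt wx wy (- sin th) (cos th) rho Hwx Hwy ltac:(lra) ltac:(lra)) as Bc.
  apply Rabs_def2 in Ba.
  assert (HT : 0 < tan delta) by (apply tan_gt_0; lra).
  destruct (polar_near_direction th delta (px x1 - px x) (py x1 - py x) Hdelta)
    as [r [phi [Hr [Hphi [Ex Ey]]]]].
  - rewrite Ea. lra.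
  - rewrite Ea, Ec.
    assert (tan delta * (d / 2) <= tan delta * (d + (wx * cos th + wy * sin th)))
      by (apply Rmult_le_compat_l; lra).
    lra.
  - exists r, phi. repeat split; [exact Hr | exact Hphi | lra | lra].
Qed.

Lemma ldist2_near_ray x x1 th d rho :
  0 < d -> rho <= d / 4 ->
  Rabs (px x1 - (px x + d * cos th)) < rho ->
  Rabs (py x1 - (py x + d * sin th)) < rho ->
  ldist2 x x1 < 3 * d ^ 2.
Proof.
  set (wx := px x1 - (px x + d * cos th)). set (wy := py x1 - (py x + d * sin th)).
  intros Hd Hrho Hwx Hwy.
  pose proof (COS_bound th); pose proof (SIN_bound th).
  pose proof (Rabs_lin_comb_lt wx wy (cos th) (sin th) rho Hwx Hwy ltac:(lra) ltac:(lra)) as B.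
  pose proof (Rle_abs (wx * cos th + wy * sin th)).
  assert (wx ^ 2 < rho ^ 2) by (rewrite <- pow2_abs; pose proof (Rabs_pos wx); nra).
  assert (wy ^ 2 < rho ^ 2) by (rewrite <- pow2_abs; pose proof (Rabs_pos wy); nra).
  assert (E : ldist2 x x1 = d ^ 2 + 2 * d * (wx * cos th + wy * sin th) + (wx ^ 2 + wy ^ 2)).
  { unfold ldist2, wx, wy.
    replace (d ^ 2) with (d ^ 2 * (cos th ^ 2 + sin th ^ 2)) at 1 by (rewrite cos2_sin2; ring).
    ring. }
  rewrite E. pose proof (Rabs_pos wx). nra.
Qed.

Lemma cos_sin_add_sign_PI t s : s = 1 \/ s = -1 ->
  cos (t + s * PI) = - cos t /\ sin (t + s * PI) = - sin t.
Proof.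
  intros [-> | ->].
  - rewrite Rmult_1_l. split; [apply neg_cos | apply neg_sin].
  - replace (t + -1 * PI) with (t - PI) by ring.
    rewrite cos_minus, sin_minus, cos_PI, sin_PI. split; ring.
Qed.

Lemma cone_pair_near_ray eps x x1 d rho s u :
  0 < eps < PI / 2 -> 0 < d -> rho <= d / 4 -> 4 * rho <= d * tan (eps / 2) ->
  2 * PI * rho <= eps / 4 -> (s = 1 \/ s = -1) ->
  2 * PI * u = 2 * PI * mk x + s * PI - s * (eps / 4) ->
  Rabs (px x1 - (px x + d * cos (2 * PI * mk x))) < rho ->
  Rabs (py x1 - (py x + d * sin (2 * PI * mk x))) < rho ->
  Rabs (mk x1 - u) < rho ->
  in_coneP eps x x1 /\ in_coneP eps x1 x.
Proof.
  intros He Hd Hrho Htan Hmk Hs Hu Hx Hy Hm. pose proof PI_RGT_0.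
  destruct (polar_near_ray x x1 (2 * PI * mk x) d rho (eps / 2) ltac:(lra) Hd Hrho Htan Hx Hy)
    as [r [phi [Hr [Hphi [Ex Ey]]]]].
  apply Rabs_def2 in Hphi.
  split.
  - exists r, (2 * PI * mk x + phi). repeat split; [exact Hr | | exact Ex | exact Ey].
    apply Rabs_def1; lra.
  - destruct (cos_sin_add_sign_PI (2 * PI * mk x + phi) s Hs) as [Ec Es].
    exists r, (2 * PI * mk x + phi + s * PI).
    repeat split; [exact Hr | | rewrite Ec; lra | rewrite Es; lra].
    apply Rabs_def2 in Hm.
    assert (2 * PI * (mk x1 - u) < 2 * PI * rho) by (apply Rmult_lt_compat_l; lra).
    assert (2 * PI * - rho < 2 * PI * (mk x1 - u)) by (apply Rmult_lt_compat_l; lra).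
    apply Rabs_def1; destruct Hs as [-> | ->]; lra.
Qed.

Lemma antipodal_mark m g : 0 <= m <= 1 -> 0 < g < 1 / 4 ->
  exists s, (s = 1 \/ s = -1) /\ g <= m + s * (1 / 2 - g) <= 1 - g.
Proof.
  intros Hm Hg. destruct (Rle_dec m (1 / 2)); [exists 1 | exists (-1)]; split; auto; lra.
Qed.

Lemma in_ball_1 cs rho xs : in_ball 1 cs rho xs -> dist3sq (xs O) (cs O) < rho ^ 2.
Proof. unfold in_ball. simpl. lra. Qed.

Lemma dist3sq_lt_components y c rho : 0 < rho -> dist3sq y c < rho ^ 2 ->
  Rabs (px y - px c) < rho /\ Rabs (py y - py c) < rho /\ Rabs (mk y - mk c) < rho.
Proof.
  unfold dist3sq. intros Hrho Hlt.
  pose proof (pow2_ge_0 (px y - px c)); pose proof (pow2_ge_0 (py y - py c));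
  pose proof (pow2_ge_0 (mk y - mk c)).
  repeat split; apply Rabs_lt_of_pow2_lt; lra.
Qed.

(* The centre of the ball sits at distance [d] from [x] in the direction of the cone of [x],
   with the mark pointing back at [x] (up to [eps/4], to keep the ball inside [0,1]). *)
Lemma return_ball eps x M : 0 < eps < PI / 2 -> 0 <= mk x <= 1 -> 0 < M ->
  exists c rho, ball_in_space 1 (fun _ => c) rho /\
    forall x1, dist3sq x1 c < rho ^ 2 ->
      in_coneP eps x x1 /\ in_coneP eps x1 x /\ 4 * ldist2 x x1 < M.
Proof.
  intros He Hmx HM. pose proof PI_RGT_0.
  set (g := eps / (8 * PI)).
  assert (Hg : 0 < g < 1 / 4 /\ 2 * PI * g = eps / 4).
  { unfold g. split; [split|field; lra].
    - apply Rdiv_lt_0_compat; lra.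
    - apply Rmult_lt_reg_r with (8 * PI); [lra|]. field_simplify; lra. }
  set (d := sqrt M / 4).
  assert (Hd : 0 < d /\ 16 * d ^ 2 = M).
  { unfold d. split; [apply Rdiv_lt_0_compat; [apply sqrt_lt_R0|]; lra|].
    replace (16 * (sqrt M / 4) ^ 2) with (sqrt M ^ 2) by field. apply pow2_sqrt; lra. }
  assert (HT : 0 < tan (eps / 2)) by (apply tan_gt_0; lra).
  set (rho := Rmin g (Rmin (d / 4) (d * tan (eps / 2) / 4))).
  assert (Hrho : 0 < rho /\ rho <= g /\ rho <= d / 4 /\ 4 * rho <= d * tan (eps / 2)).
  { unfold rho. pose proof (Rmin_l g (Rmin (d / 4) (d * tan (eps / 2) / 4))).
    pose proof (Rmin_r g (Rmin (d / 4) (d * tan (eps / 2) / 4))).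
    pose proof (Rmin_l (d / 4) (d * tan (eps / 2) / 4)).
    pose proof (Rmin_r (d / 4) (d * tan (eps / 2) / 4)).
    assert (0 < d * tan (eps / 2)) by nra.
    repeat split; try lra. repeat apply Rmin_pos; lra. }
  destruct (antipodal_mark (mk x) g Hmx (proj1 Hg)) as [s [Hs Hu]].
  set (u := mk x + s * (1 / 2 - g)) in Hu.
  assert (H2u : 2 * PI * u = 2 * PI * mk x + s * PI - s * (eps / 4)).
  { destruct Hg as [_ Hg]. unfold u. rewrite <- Hg. field. }
  exists (mkMP (px x + d * cos (2 * PI * mk x)) (py x + d * sin (2 * PI * mk x)) u), rho.
  split.
  - split; [lra|]. intros xs Hxs i Hi. replace i with O by lia.
    destruct (dist3sq_lt_components _ _ _ (proj1 Hrho) (in_ball_1 _ _ _ Hxs)) as [_ [_ Hm]].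
    apply Rabs_def2 in Hm. simpl in Hm. lra.
  - intros x1 Hx1.
    destruct (dist3sq_lt_components _ _ _ (proj1 Hrho) Hx1) as [Hpx [Hpy Hm]]. simpl in *.
    assert (2 * PI * rho <= eps / 4)
      by (destruct Hg as [_ Hg]; rewrite <- Hg; apply Rmult_le_compat_l; lra).
    destruct (cone_pair_near_ray eps x x1 d rho s u He (proj1 Hd) ltac:(lra) ltac:(lra)
                ltac:(lra) Hs H2u Hpx Hpy Hm) as [Cx Cx1].
    pose proof (ldist2_near_ray x x1 (2 * PI * mk x) d rho (proj1 Hd) ltac:(lra) Hpx Hpy).
    repeat split; [exact Cx | exact Cx1 | lra].
Qed.

Lemma in_coneP_not_same_loc eps x y : in_coneP eps x y -> ~ (px y = px x /\ py y = py x).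
Proof.
  intros Cy [Ex Ey]. pose proof (in_coneP_ldist2_pos _ _ _ Cy) as Hpos.
  unfold ldist2 in Hpos. rewrite Ex, Ey in Hpos. lra.
Qed.

(* All other points of [phi] are too far from [x] to compete with the new point [x1]. *)
Lemma two_cycle_of_isolated eps phi (P : MP -> Prop) x x1 M :
  isolated_in phi x M -> P x -> P x1 -> (forall y, P y -> phi y \/ y = x1) ->
  (forall y, P y -> exists z, is_h eps P y z) ->
  in_coneP eps x x1 -> in_coneP eps x1 x -> 4 * ldist2 x x1 < M ->
  is_h eps P x x1 /\ is_h eps P x1 x.
Proof.
  intros Hiso Px Px1 HP Hex Cx Cx1 Hd. pose proof (ldist2_ge0 x x1).
  split; apply is_h_of_nearest; auto; intros z Pz Cz Hz; exfalso.
  - destruct (HP z Pz) as [phiz | ->]; [|lra].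
    apply (in_coneP_not_same_loc eps x z Cz), Hiso; [exact phiz | lra].
  - destruct (HP z Pz) as [phiz | ->].
    + pose proof (ldist2_triangle x x1 z) as Htri. rewrite (ldist2_sym x1 x) in Hz, Htri.
      destruct (Hiso z phiz ltac:(pose proof (ldist2_ge0 x1 z); lra)) as [Ex Ey].
      rewrite (ldist2_same_loc x1 x z Ex Ey), ldist2_sym in Hz. lra.
    + apply (in_coneP_not_same_loc eps x1 x1 Cz). split; reflexivity.
Qed.

Lemma add_pts_1_inv phi xs y : add_pts phi 1 xs y -> phi y \/ y = xs O.
Proof. intros [Hy | [i [Hi ->]]]; [left; exact Hy | right; f_equal; lia]. Qed.

Lemma add_pts_1_added phi xs : add_pts phi 1 xs (xs O).
Proof. right. exists O. split; [lia | reflexivity]. Qed.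

Lemma one_looping_of_two_cycle eps phi x xs :
  phi x -> is_h eps (add_pts phi 1 xs) x (xs O) -> is_h eps (add_pts phi 1 xs) (xs O) x ->
  (forall y, For eps (add_pts phi 1 xs) x y -> in_new x 1 xs y) /\
  (forall i, (i < 1)%nat ->
     conn eps (add_pts phi 1 xs) x (xs i) /\
     (forall y, For eps (add_pts phi 1 xs) (xs i) y -> in_new x 1 xs y)) /\
  (forall y z z', phi y -> y <> x -> is_h eps phi y z -> is_h eps (add_pts phi 1 xs) y z' ->
     z' <> z -> Back eps (add_pts phi 1 xs) x z' /\ in_new x 1 xs z').
Proof.
  set (P := add_pts phi 1 xs). intros Hx Hh Hh1.
  assert (Hnew : forall y, y = x \/ y = xs O -> in_new x 1 xs y).
  { intros y [-> | ->]; [left; reflexivity | right; exists O; split; [lia | reflexivity]]. }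
  split; [|split].
  - intros y Hy. apply Hnew. eapply For_two_cycle; eassumption.
  - intros i Hi. replace i with O by lia. split.
    + apply conn_fwd with x; [apply conn_refl | left; exact Hx | exact Hh].
    + intros y Hy. apply Hnew, or_comm. eapply For_two_cycle; eassumption.
  - intros y z z' Hy _ Hz Hz' Hne.
    destruct (add_pts_1_inv phi xs z' (proj1 Hz')) as [phiz' | ->].
    + exfalso. apply Hne. apply (is_h_unique eps phi y); [|exact Hz].
      apply (is_h_subset eps P); [intros w Hw; left; exact Hw | exact phiz' | exact Hz'].
    + split; [split|apply Hnew; right; reflexivity].
      * apply add_pts_1_added.
      * apply For_step with (xs O); [apply For_refl | exact Hh1].
Qed.

Theorem proposition5p3 :
  forall eps : R, 0 < eps < PI / 2 ->
  forall phi : MP -> Prop, Cprime eps phi -> k_looping eps 1 phi.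
Proof.
  intros eps He phi Hphi. split; [exact Hphi|]. intros x Hx.
  destruct Hphi as [Hcfg _].
  destruct (config_isolated phi x Hcfg) as [M [HM Hiso]].
  destruct (return_ball eps x M He (proj1 Hcfg x Hx) HM) as [c [rho [Hball Hret]]].
  exists (fun _ => c), rho. split; [exact Hball|].
  intros xs Hxs. cbv zeta. intros [_ Hex].
  destruct (Hret (xs O) (in_ball_1 _ _ _ Hxs)) as [Cx [Cx1 Hd]].
  destruct (two_cycle_of_isolated eps phi (add_pts phi 1 xs) x (xs O) M Hiso (or_introl Hx)
              (add_pts_1_added phi xs) (add_pts_1_inv phi xs) Hex Cx Cx1 Hd) as [Hh Hh1].
  exact (one_looping_of_two_cycle eps phi x xs Hx Hh Hh1).
Qed.
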